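(* Let $\|f^{(\beta_* )}\|<\infty$ for some $\beta_*>1$, $\hat\beta_*=\beta_*\wedge1.5$, $\varepsilon\in(0,1)$ with $N_\varepsilon=\lfloor(\varepsilon^2\log\varepsilon^{-5})^{-1/(2\beta_*+1)}\rfloor\ge1$, and let $h\in[0,1]^{N_\varepsilon}$ (possibly random). Let $\hat X=\max_{1\le k\le N_\varepsilon}\sqrt{\xi_k(\vartheta)^2+\xi_k^*(\vartheta)^2}$. Then, almost surely, for all $\tau$ with $4\pi|\tau-\vartheta|\le N_\varepsilon^{-1}$, $$\Big|\Phi_\varepsilon''(\tau,h)+\sum_{k=1}^{N_\varepsilon}(2\pi k)^2h_kf_k^2\Big|\le N_\varepsilon^{2-2\hat\beta_*}\Big(\|f^{(\beta_* )}\|+\frac{2\pi\hat X}{\sqrt{\log\varepsilon^{-5}}}\Big)^2.$$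
   Context: Model: $\vartheta\in\mathbb R$, $f$ locally square integrable, even, $1$-periodic; $f_k=\sqrt2\int_{-1/2}^{1/2}\cos(2\pi kt)f(t)dt$, $\|f^{(\beta)}\|^2=\sum_{k\ge1}(2\pi k)^{2\beta}f_k^2$. Observations $x_k=f_k\cos(2\pi k\vartheta)+\varepsilon\xi_k$, $x_k^*=f_k\sin(2\pi k\vartheta)+\varepsilon\xi_k^*$, $\xi_k,\xi_k^*$ i.i.d. $\mathcal N(0,1)$. Define $\xi_k(\vartheta)=\xi_k\cos(2\pi k\vartheta)+\xi_k^*\sin(2\pi k\vartheta)$, $\xi^*_k(\vartheta)=\xi_k^*\cos(2\pi k\vartheta)-\xi_k\sin(2\pi k\vartheta)$ (so that $x_k\cos(2\pi k\vartheta)+x_k^*\sin(2\pi k\vartheta)=f_k+\varepsilon\xi_k(\vartheta)$ and $x_k^*\cos(2\pi k\vartheta)-x_k\sin(2\pi k\vartheta)=\varepsilon\xi_k^*(\vartheta)$). $h\in[0,1]^N$ extended by $0$; $\Phi_\varepsilon(\tau,h)=\frac12\sum_kh_k(x_k\cos(2\pi k\tau)+x_k^*\sin(2\pi k\tau))^2$, $\Phi''_\varepsilon$ its second derivative in $\tau$. *)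

From HB Require Import structures.
From mathcomp Require Import all_boot all_order all_algebra.
From mathcomp Require Import all_classical all_reals all_analysis.
Set Implicit Arguments. Unset Strict Implicit. Unset Printing Implicit Defensive.
Import Order.TTheory GRing.Theory Num.Theory.
Import numFieldNormedType.Exports.
Local Open Scope classical_set_scope.
Local Open Scope ring_scope.

Section Model.
Variable R : realType.

Definition fcoef (f : R -> R) (k : nat) : R :=
  Num.sqrt 2 * \int[@lebesgue_measure R]_(t in `[(-(1/2)), (1/2)]) (cos (2 * pi * k%:R * t) * f t).

Definition sobnorm2 (f : R -> R) (beta : R) : \bar R :=
  (\sum_(1 <= k <oo) ((2 * pi * k%:R) `^ (2 * beta) * fcoef f k ^+ 2)%:E)%E.

Definition sobnorm (f : R -> R) (beta : R) : R := Num.sqrt (fine (sobnorm2 f beta)).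

Definition admissible_f (f : R -> R) : Prop :=
  measurable_fun setT f /\
  (forall a b : R, (@lebesgue_measure R).-integrable `[a, b] (fun t => ((f t) ^+ 2)%:E)) /\
  (forall t, f (- t) = f t) /\
  (forall t, f (t + 1) = f t).

Definition obs_x (f : R -> R) (theta eps : R) (xi : nat -> R) (k : nat) : R :=
  fcoef f k * cos (2 * pi * k%:R * theta) + eps * xi k.
Definition obs_xs (f : R -> R) (theta eps : R) (xis : nat -> R) (k : nat) : R :=
  fcoef f k * sin (2 * pi * k%:R * theta) + eps * xis k.

Definition xi_th (xi xis : nat -> R) (theta : R) (k : nat) : R :=
  xi k * cos (2 * pi * k%:R * theta) + xis k * sin (2 * pi * k%:R * theta).
Definition xis_th (xi xis : nat -> R) (theta : R) (k : nat) : R :=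
  xis k * cos (2 * pi * k%:R * theta) - xi k * sin (2 * pi * k%:R * theta).

(* Phi_eps(tau, h) with h supported on {1..N} (extended by 0) *)
Definition Phi (N : nat) (x xs : nat -> R) (h : nat -> R) (tau : R) : R :=
  2^-1 * \sum_(1 <= k < N.+1)
     h k * (x k * cos (2 * pi * k%:R * tau) + xs k * sin (2 * pi * k%:R * tau)) ^+ 2.

Definition Phi'' (N : nat) (x xs : nat -> R) (h : nat -> R) (tau : R) : R :=
  derive1 (derive1 (Phi N x xs h)) tau.

Definition Xhat (N : nat) (xi xis : nat -> R) (theta : R) : R :=
  \big[Num.max/0]_(1 <= k < N.+1)
     Num.sqrt (xi_th xi xis theta k ^+ 2 + xis_th xi xis theta k ^+ 2).

End Model.

From HB Require Import structures.
From mathcomp Require Import all_boot all_order all_algebra.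
From mathcomp Require Import all_classical all_reals all_analysis.
From mathcomp Require Import ring lra.
Import Order.TTheory GRing.Theory Num.Theory.
Import numFieldNormedType.Exports.
Set Implicit Arguments. Unset Strict Implicit. Unset Printing Implicit Defensive.
Local Open Scope classical_set_scope.
Local Open Scope ring_scope.

(* Writing w_k = 2 pi k, the k-th summand of Phi is h_k g_k^2 / 2 for a sinusoid g_k of
   frequency w_k, and g_k'' = - w_k^2 g_k, so Phi'' = sum_k h_k (g_k'^2 - w_k^2 g_k^2).
   Rotating to the phase error w_k (tau - theta), g_k = f_k cos + eps xi_k(tau) and
   g_k' / w_k = - f_k sin + eps xi_k^*(tau); adding w_k^2 h_k f_k^2 leaves per frequency
   w_k^2 (2 f_k^2 sin^2 + 2 eps |f_k| Xhat + eps^2 Xhat^2) at most.  As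
   |sin| <= k / (2 N) on the window, the signal terms sum to at most
   N^(2 - 2 bh) ||f^(beta)||^2, while Cauchy-Schwarz and the choice of N, i.e.
   eps^2 log(eps^-5) N^(2 beta + 1) <= 1, turn the noise terms into the cross and square
   terms of N^(2 - 2 bh) (||f^(beta)|| + 2 pi Xhat / sqrt (log eps^-5))^2. *)

Section SecondDerivativeBound.
Variable R : realType.

Definition sinusoid (X Y w t : R) : R := X * cos (w * t) + Y * sin (w * t).

Lemma is_derive_sinusoid (X Y w t : R) :
  is_derive t 1 (sinusoid X Y w) (w * sinusoid Y (- X) w t).
Proof.
have dlin : is_derive t 1 (fun s : R => w * s) w.
  by apply: is_derive_eq (is_deriveZ w (is_derive_id t 1)) _; rewrite /GRing.scale /= mulr1.
have dcos := is_derive1_comp (is_derive_cos (w * t)) dlin.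
have dsin := is_derive1_comp (is_derive_sin (w * t)) dlin.
apply: is_derive_eq (is_deriveD (is_deriveZ X dcos) (is_deriveZ Y dsin)) _.
by rewrite /sinusoid /GRing.scale /=; ring.
Qed.

Lemma is_derive_sinusoidM (X Y X' Y' w t : R) :
  is_derive t 1 (fun s => sinusoid X Y w s * sinusoid X' Y' w s)
    (w * (sinusoid X Y w t * sinusoid Y' (- X') w t
          + sinusoid Y (- X) w t * sinusoid X' Y' w t)).
Proof.
apply: is_derive_eq (is_deriveM (is_derive_sinusoid X Y w t) (is_derive_sinusoid X' Y' w t)) _.
by rewrite /GRing.scale /=; ring.
Qed.

Lemma is_derive_sum_nat (F : nat -> R -> R) (dF : nat -> R) (t : R) m n :
  (forall k, is_derive t 1 (F k) (dF k)) ->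
  is_derive t 1 (fun s => \sum_(m <= k < n) F k s) (\sum_(m <= k < n) dF k).
Proof.
move=> dFk; rewrite -fct_sumE.
by elim/big_ind2 : _ => // *; [exact: is_derive_cst | exact: is_deriveD].
Qed.

Lemma derive1_is_derive (f : R -> R) (t df : R) : is_derive t 1 f df -> derive1 f t = df.
Proof. by move=> ?; rewrite derive1E derive_val. Qed.

Lemma derive1_Phi N (x xs h : nat -> R) :
  derive1 (Phi N x xs h) = fun t => \sum_(1 <= k < N.+1) h k * (2 * pi * k%:R) *
    (sinusoid (x k) (xs k) (2 * pi * k%:R) t * sinusoid (xs k) (- x k) (2 * pi * k%:R) t).
Proof.
apply/funext => t; apply: derive1_is_derive.
have dPhi : is_derive t 1 (Phi N x xs h) _ := is_deriveZ (2^-1) (is_derive_sum_nat 1 N.+1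
  (fun k => is_deriveZ (h k) (is_derive_sinusoidM (x k) (xs k) (x k) (xs k) (2 * pi * k%:R) t))).
apply: is_derive_eq dPhi _.
rewrite /GRing.scale /= mulr_sumr; apply: eq_bigr => k _.
by rewrite /sinusoid; field.
Qed.

Lemma Phi''E N (x xs h : nat -> R) tau :
  Phi'' N x xs h tau = \sum_(1 <= k < N.+1) h k * (2 * pi * k%:R) ^+ 2 *
    (sinusoid (xs k) (- x k) (2 * pi * k%:R) tau ^+ 2
     - sinusoid (x k) (xs k) (2 * pi * k%:R) tau ^+ 2).
Proof.
rewrite /Phi''; apply: derive1_is_derive; rewrite derive1_Phi.
apply: is_derive_eq (is_derive_sum_nat (F := fun k s => h k * (2 * pi * k%:R) *
    (sinusoid (x k) (xs k) (2 * pi * k%:R) s * sinusoid (xs k) (- x k) (2 * pi * k%:R) s))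
  1 N.+1 (fun k => is_deriveZ (h k * (2 * pi * k%:R))
     (is_derive_sinusoidM (x k) (xs k) (xs k) (- x k) (2 * pi * k%:R) tau))) _.
apply: eq_bigr => k _; rewrite /GRing.scale /= /sinusoid; ring.
Qed.

Lemma norm_le_sqrt_sqr_add (c s p q : R) : c ^+ 2 + s ^+ 2 = 1 ->
  `|s * q + c * p| <= Num.sqrt (p ^+ 2 + q ^+ 2).
Proof.
move=> cs; rewrite -sqrtr_sqr ler_wsqrtr // -subr_ge0.
have -> : p ^+ 2 + q ^+ 2 - (s * q + c * p) ^+ 2
    = (1 - (c ^+ 2 + s ^+ 2)) * (p ^+ 2 + q ^+ 2) + (s * p - c * q) ^+ 2 by ring.
by rewrite cs subrr mul0r add0r sqr_ge0.
Qed.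

(* [c] and [s] stand for the cosine and sine of the phase error, [p] and [q] for the rotated
   noise: the noise-free part f^2 (1 - c^2 + s^2) = 2 f^2 s^2 vanishes with the phase error. *)
Lemma quadrature_defect_le (f e c s p q : R) : c ^+ 2 + s ^+ 2 = 1 -> 0 <= e ->
  `|(e * q - f * s) ^+ 2 - (f * c + e * p) ^+ 2 + f ^+ 2|
    <= 2 * f ^+ 2 * s ^+ 2 + 2 * e * `|f| * Num.sqrt (p ^+ 2 + q ^+ 2)
       + e ^+ 2 * (p ^+ 2 + q ^+ 2).
Proof.
move=> cs e0.
have -> : (e * q - f * s) ^+ 2 - (f * c + e * p) ^+ 2 + f ^+ 2
    = 2 * f ^+ 2 * s ^+ 2 - 2 * e * f * (s * q + c * p) + e ^+ 2 * (q ^+ 2 - p ^+ 2)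
      + f ^+ 2 * (1 - (c ^+ 2 + s ^+ 2)) by ring.
rewrite cs subrr mulr0 addr0.
have qp : `|q ^+ 2 - p ^+ 2| <= p ^+ 2 + q ^+ 2.
  apply: le_trans (ler_normB _ _) _.
  by rewrite !ger0_norm ?sqr_ge0 // addrC.
apply: le_trans (ler_normD _ _) _; apply: lerD; last first.
  by rewrite normrM ger0_norm ?sqr_ge0 // ler_wpM2l ?sqr_ge0.
apply: le_trans (ler_normB _ _) _; apply: lerD.
  by rewrite ger0_norm ?lexx // mulr_ge0 ?sqr_ge0 // mulr_ge0 ?sqr_ge0.
rewrite !normrM normr_nat (ger0_norm e0) ler_wpM2l ?mulr_ge0 //.
exact: norm_le_sqrt_sqr_add.
Qed.

Lemma powR_sub_exponent_le (a n beta bh : R) : 1 <= a <= n -> bh <= beta -> bh <= 2 ->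
  a `^ (4 - 2 * beta) <= n `^ (4 - 2 * bh).
Proof.
move=> /andP[a1 an] hbb hb2.
rewrite (@le_trans _ _ (a `^ (4 - 2 * bh))) //; first by rewrite ler_powR //; lra.
by rewrite ge0_ler_powR ?nnegrE //; lra.
Qed.

Lemma powR_splitD (a r s : R) : 0 < a -> a `^ (r + s) = a `^ r * a `^ s.
Proof. by move=> a0; rewrite powRD // (lt0r_neq0 a0) implybT. Qed.

Lemma scale_powR_le (z n p q : R) : 0 <= z -> 0 < n -> z * n `^ p <= 1 ->
  z * n `^ q <= n `^ (q - p).
Proof.
move=> z0 n0 zp.
have -> : n `^ q = n `^ (q - p) * n `^ p by rewrite -powR_splitD // subrK.
by rewrite mulrCA -[X in _ <= X]mulr1 ler_wpM2l ?powR_ge0.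
Qed.

Lemma sqr_sin_term_le (c a n beta bh s : R) : 1 <= c -> 1 <= a <= n -> 1 <= beta ->
  bh <= beta -> bh <= 2 -> 2 * n * `|s| <= a ->
  (c * a) ^+ 2 * (2 * s ^+ 2) <= n `^ (2 - 2 * bh) * (c * a) `^ (2 * beta).
Proof.
move=> c1 /andP[a1 an] b1 hbb hb2 hs.
have n0 : 0 < n by lra.
have ns : (2 * n * s) ^+ 2 <= a ^+ 2.
  rewrite -real_normK ?num_real // normrM ger0_norm; last lra.
  by rewrite ler_sqr ?nnegrE ?mulr_ge0 //; lra.
have a4 : a ^+ 4 <= n ^+ 2 * (n `^ (2 - 2 * bh) * a `^ (2 * beta)).
  have -> : a ^+ 4 = a `^ (4 - 2 * beta) * a `^ (2 * beta).
    by rewrite -powR_splitD ?subrK ?powR_mulrn //; lra.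
  have -> : n ^+ 2 * (n `^ (2 - 2 * bh) * a `^ (2 * beta)) = n `^ (4 - 2 * bh) * a `^ (2 * beta).
    by rewrite mulrA -powR_mulrn ?(ltW n0) // -powR_splitD //; congr (_ `^ _ * _); ring.
  by rewrite ler_wpM2r ?powR_ge0 ?powR_sub_exponent_le ?a1.
have c2 : c ^+ 2 <= c `^ (2 * beta).
  by rewrite -powR_mulrn; [rewrite ler_powR //; lra | lra].
rewrite -(@ler_pM2r _ (2 * n ^+ 2)); last by rewrite mulr_gt0 ?exprn_gt0.
have -> : (c * a) ^+ 2 * (2 * s ^+ 2) * (2 * n ^+ 2) = (c * a) ^+ 2 * (2 * n * s) ^+ 2 by ring.
rewrite powRM; try lra.
apply: le_trans (_ : c ^+ 2 * a ^+ 4 <= _).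
  by rewrite (_ : c ^+ 2 * a ^+ 4 = (c * a) ^+ 2 * a ^+ 2); [rewrite ler_wpM2l ?sqr_ge0 | ring].
have -> : n `^ (2 - 2 * bh) * (c `^ (2 * beta) * a `^ (2 * beta)) * (2 * n ^+ 2)
  = 2 * (c `^ (2 * beta) * (n ^+ 2 * (n `^ (2 - 2 * bh) * a `^ (2 * beta)))) by ring.
have hr : 0 <= c `^ (2 * beta) * (n ^+ 2 * (n `^ (2 - 2 * bh) * a `^ (2 * beta)))
  := mulr_ge0 (powR_ge0 _ _) (mulr_ge0 (sqr_ge0 _) (mulr_ge0 (powR_ge0 _ _) (powR_ge0 _ _))).
apply: le_trans (_ : c `^ (2 * beta) * (n ^+ 2 * (n `^ (2 - 2 * bh) * a `^ (2 * beta))) <= _).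
  by rewrite ler_pM ?sqr_ge0 ?exprn_ge0 //; lra.
lra.
Qed.

Lemma powR_weight_le (c a n beta bh : R) : 1 <= c -> 1 <= a <= n -> 1 <= beta ->
  bh <= beta -> bh <= 2 -> (c * a) `^ (4 - 2 * beta) <= c ^+ 2 * n `^ (4 - 2 * bh).
Proof.
move=> c1 /andP[a1 an] b1 hbb hb2.
rewrite powRM; try lra.
rewrite ler_pM ?powR_ge0 ?powR_sub_exponent_le ?a1 //.
by rewrite -powR_mulrn; [rewrite ler_powR //; lra | lra].
Qed.

Lemma sqr_sum_mul_le (F G : nat -> R) m n :
  (\sum_(m <= k < n) F k * G k) ^+ 2 <=
  (\sum_(m <= k < n) F k ^+ 2) * (\sum_(m <= k < n) G k ^+ 2).
Proof.
set A := \sum_(m <= k < n) F k ^+ 2.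
set B := \sum_(m <= k < n) G k ^+ 2.
set C := \sum_(m <= k < n) F k * G k.
have quad t : 0 <= A - 2 * t * C + t ^+ 2 * B.
  have -> : A - 2 * t * C + t ^+ 2 * B = \sum_(m <= k < n) (F k - t * G k) ^+ 2.
    rewrite /A /B /C !mulr_sumr -sumrN -!big_split /=.
    by apply: eq_bigr => k _; ring.
  by apply: sumr_ge0 => k _; exact: sqr_ge0.
have [B0|Bpos] : B = 0 \/ 0 < B.
  by case: (ltgtP B 0) (sumr_ge0 _ (fun k _ => sqr_ge0 (G k)) : 0 <= B) => //; [lra | left].
- have [->|C0] := eqVneq C 0; first by rewrite B0 expr0n mulr0.
  have := quad ((A + 1) / (2 * C)).
  by rewrite B0 mulr0 addr0 (_ : 2 * _ * C = A + 1); [lra | field; rewrite C0].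
- have := quad (C / B).
  rewrite (_ : A - _ + _ = (A * B - C ^+ 2) / B); last by field; rewrite gt_eqF.
  by rewrite pmulr_lge0 ?invr_gt0 // subr_ge0.
Qed.

Lemma sqr_sum_weighted_le (w a : nat -> R) (beta : R) m n :
  (forall k, (m <= k < n)%N -> 0 < w k) ->
  (\sum_(m <= k < n) w k ^+ 2 * `|a k|) ^+ 2 <=
  (\sum_(m <= k < n) w k `^ (2 * beta) * a k ^+ 2) * (\sum_(m <= k < n) w k `^ (4 - 2 * beta)).
Proof.
move=> w0.
have := sqr_sum_mul_le (fun k => w k `^ beta * `|a k|) (fun k => w k `^ (2 - beta)) m n.
have -> : \sum_(m <= k < n) w k `^ beta * `|a k| * w k `^ (2 - beta)
    = \sum_(m <= k < n) w k ^+ 2 * `|a k|.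
  apply: eq_big_nat => k /w0 wk.
  by rewrite mulrAC -powR_splitD // addrC subrK powR_mulrn // ltW.
have -> : \sum_(m <= k < n) (w k `^ beta * `|a k|) ^+ 2
    = \sum_(m <= k < n) w k `^ (2 * beta) * a k ^+ 2.
  apply: eq_big_nat => k /w0 wk.
  rewrite exprMn real_normK ?num_real // -[(w k `^ beta) ^+ 2]powR_mulrn ?powR_ge0 //.
  by rewrite -powRrM (mulrC beta).
have -> : \sum_(m <= k < n) (w k `^ (2 - beta)) ^+ 2 = \sum_(m <= k < n) w k `^ (4 - 2 * beta).
  apply: eq_big_nat => k _.
  by rewrite -powR_mulrn ?powR_ge0 // -powRrM; congr (_ `^ _); ring.
by [].
Qed.

Lemma sum_sqr_freq_le (z beta bh : R) (N : nat) : 0 <= z -> (1 <= N)%N -> bh <= beta ->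
  z * N%:R `^ (2 * beta + 1) <= 1 ->
  z * \sum_(1 <= k < N.+1) (2 * pi * k%:R) ^+ 2 <= (2 * pi) ^+ 2 * N%:R `^ (2 - 2 * bh).
Proof.
move=> z0 N1 hbb zN.
have n1 : 1 <= N%:R :> R by rewrite ler1n.
have pi0 := @pi_gt0 R.
have sumW : \sum_(1 <= k < N.+1) (2 * pi * k%:R) ^+ 2 <= (2 * pi) ^+ 2 * N%:R `^ 3%:R :> R.
  apply: le_trans (_ : \sum_(1 <= k < N.+1) (2 * pi) ^+ 2 * N%:R ^+ 2 <= _).
    apply: ler_sum_nat => k /andP[_ kN]; rewrite exprMn ler_wpM2l ?sqr_ge0 //.
    by rewrite ler_sqr ?nnegrE ?ler0n // ler_nat -ltnS.
  by rewrite sumr_const_nat subn1 /= powR_mulrn ?ler0n // -mulr_natr exprS; lra.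
rewrite (le_trans (ler_wpM2l z0 sumW)) // mulrCA ler_wpM2l ?sqr_ge0 //.
apply: le_trans (scale_powR_le _ z0 (lt_le_trans ltr01 n1) zN) _.
by rewrite ler_powR //; lra.
Qed.

Lemma sum_powR_freq_le (z beta bh : R) (N : nat) : 0 <= z -> (1 <= N)%N -> 1 <= beta ->
  bh <= beta -> bh <= 2 -> z * N%:R `^ (2 * beta + 1) <= 1 ->
  z * \sum_(1 <= k < N.+1) (2 * pi * k%:R) `^ (4 - 2 * beta)
    <= (2 * pi) ^+ 2 * (N%:R `^ (2 - 2 * bh)) ^+ 2.
Proof.
move=> z0 N1 b1 hbb hb2 zN.
have n1 : 1 <= N%:R :> R by rewrite ler1n.
have n0 : 0 < N%:R :> R by lra.
have pi2 := @pi_ge2 R.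
have sumG : \sum_(1 <= k < N.+1) (2 * pi * k%:R) `^ (4 - 2 * beta)
    <= (2 * pi) ^+ 2 * N%:R `^ (5 - 2 * bh) :> R.
  apply: le_trans (_ : \sum_(1 <= k < N.+1) (2 * pi) ^+ 2 * N%:R `^ (4 - 2 * bh) <= _).
    apply: ler_sum_nat => k /andP[k1 kN]; apply: powR_weight_le => //; first lra.
    by rewrite ler1n k1 ler_nat -ltnS.
  rewrite sumr_const_nat subn1 /= -[_ *+ N]mulr_natr -mulrA ler_wpM2l ?sqr_ge0 //.
  rewrite -[X in _ * X]powRr1 ?(ltW n0) // -powR_splitD //.
  by rewrite (_ : 4 - 2 * bh + 1 = 5 - 2 * bh) ?lexx //; ring.
rewrite (le_trans (ler_wpM2l z0 sumG)) // mulrCA ler_wpM2l ?sqr_ge0 //.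
apply: le_trans (scale_powR_le _ z0 n0 zN) _.
rewrite -powR_mulrn ?powR_ge0 // -powRrM.
by rewrite ler_powR //; lra.
Qed.

Lemma sum_terms_le_sqr (M A S C G W X e L c : R) :
  0 <= M -> A <= S ^+ 2 -> 0 <= S -> 0 <= X -> 0 <= e -> 0 < L -> 0 <= G -> 0 <= c ->
  C ^+ 2 <= A * G -> e ^+ 2 * L * G <= c ^+ 2 * M ^+ 2 -> e ^+ 2 * L * W <= c ^+ 2 * M ->
  M * A + 2 * e * X * C + e ^+ 2 * X ^+ 2 * W <= M * (S + c * X / Num.sqrt L) ^+ 2.
Proof.
move=> M0 AS S0 X0 e0 L0 G0 c0 CAG hG hW.
have sL : 0 < Num.sqrt L by rewrite sqrtr_gt0.
set D := c * X / Num.sqrt L.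
have D0 : 0 <= D by rewrite /D divr_ge0 ?mulr_ge0 // ltW.
have DL : D ^+ 2 * L = c ^+ 2 * X ^+ 2.
  by rewrite /D expr_div_n sqr_sqrtr ?(ltW L0) // divfK ?gt_eqF // exprMn.
have hA : M * A <= M * S ^+ 2 by rewrite ler_wpM2l.
have hC : e * X * C <= M * S * D.
  apply: le_trans (ler_norm _) _.
  rewrite -sqrtr_sqr -[M * S * D]ger0_norm ?mulr_ge0 // -sqrtr_sqr ler_wsqrtr //.
  rewrite -(ler_pM2r L0) (_ : (M * S * D) ^+ 2 * L = (M * S) ^+ 2 * (D ^+ 2 * L)); last ring.
  rewrite DL.
  apply: le_trans (_ : X ^+ 2 * S ^+ 2 * (e ^+ 2 * L * G) <= _); last first.
    rewrite (_ : _ * (c ^+ 2 * X ^+ 2) = X ^+ 2 * S ^+ 2 * (c ^+ 2 * M ^+ 2)); last ring.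
    by rewrite ler_wpM2l ?mulr_ge0 ?sqr_ge0.
  rewrite (_ : X ^+ 2 * S ^+ 2 * (e ^+ 2 * L * G) = (e * X) ^+ 2 * L * (S ^+ 2 * G)); last ring.
  rewrite exprMn mulrAC ler_wpM2l ?mulr_ge0 ?sqr_ge0 ?(ltW L0) //.
  by rewrite (le_trans CAG) // ler_wpM2r.
have hW' : e ^+ 2 * X ^+ 2 * W <= M * D ^+ 2.
  rewrite -(ler_pM2r L0) -[M * D ^+ 2 * L]mulrA DL.
  rewrite (_ : e ^+ 2 * X ^+ 2 * W * L = X ^+ 2 * (e ^+ 2 * L * W)); last ring.
  by rewrite (_ : M * _ = X ^+ 2 * (c ^+ 2 * M)); [rewrite ler_wpM2l ?sqr_ge0 | ring].
rewrite (_ : M * (S + D) ^+ 2 = M * S ^+ 2 + 2 * (M * S * D) + M * D ^+ 2); last ring.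
rewrite -!mulrA; lra.
Qed.

Lemma normr_sin_le (z : R) : `|sin z| <= `|z|.
Proof.
wlog z0 : z / 0 < z.
  move=> hpos; case: (ltgtP z 0) => [zn|zp|->]; last by rewrite sin0 normr0.
  - by rewrite -normrN -sinN -(normrN z) hpos // oppr_gt0.
  - exact: hpos.
have [c _] := @MVT R sin cos 0 z z0 (fun x _ => is_derive_sin x)
  (continuous_subspaceT (@continuous_sin R)).
rewrite sin0 !subr0 => ->.
by rewrite normrM -[X in _ <= X]mul1r ler_wpM2r // cos_max.
Qed.

Lemma ln_expVn_gt0 (eps : R) (n : nat) : 0 < eps < 1 -> (0 < n)%N -> 0 < ln (eps ^- n).
Proof.
move=> /andP[e0 e1] n0; apply: ln_gt0.
by rewrite invf_gt1 ?exprn_gt0 // expr_lt1 ?(ltW e0).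
Qed.

Lemma floor_powR_le (z p : R) (N : nat) : 0 < z -> 0 < p ->
  N%:Z = Num.floor (z `^ (- p^-1)) -> z * N%:R `^ p <= 1.
Proof.
move=> z0 p0 hN.
have Ny : N%:R <= z `^ (- p^-1) by move: (floor_le (z `^ (- p^-1))); rewrite -hN.
have : N%:R `^ p <= z^-1.
  rewrite -(powR_inv1 (ltW z0)) -[X in z `^ (- X)](mulVf (lt0r_neq0 p0)) -mulNr powRrM.
  by rewrite ge0_ler_powR ?nnegrE ?powR_ge0 ?(ltW p0) ?ler0n.
by move=> h; rewrite (le_trans (ler_wpM2l (ltW z0) h)) // mulfV ?gt_eqF.
Qed.

Lemma sobnorm_partial_le (f : R -> R) (beta : R) (N : nat) :
  (sobnorm2 f beta < +oo)%E ->
  \sum_(1 <= k < N.+1) (2 * pi * k%:R) `^ (2 * beta) * fcoef f k ^+ 2 <= sobnorm f beta ^+ 2.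
Proof.
move=> hfin.
have term0 k : (0 <= ((2 * pi * k%:R) `^ (2 * beta) * fcoef f k ^+ 2)%:E)%E.
  by rewrite lee_fin mulr_ge0 ?powR_ge0 ?sqr_ge0.
have s0 : (0 <= sobnorm2 f beta)%E by apply: nneseries_ge0 => k _ _.
rewrite /sobnorm sqr_sqrtr ?fine_ge0 // -lee_fin fineK ?ge0_fin_numE //.
by rewrite -sumEFin; apply: nneseries_lim_ge => k _ _.
Qed.

Lemma sqr_xi_th_add (xi xis : nat -> R) (t : R) (k : nat) :
  xi_th xi xis t k ^+ 2 + xis_th xi xis t k ^+ 2 = xi k ^+ 2 + xis k ^+ 2.
Proof.
have cs := cos2Dsin2 (2 * pi * k%:R * t).
rewrite /xi_th /xis_th.
have -> : forall a b c s : R, (a * c + b * s) ^+ 2 + (b * c - a * s) ^+ 2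
  = (a ^+ 2 + b ^+ 2) * (c ^+ 2 + s ^+ 2) by move=> a b c s; ring.
by rewrite cs mulr1.
Qed.

Lemma Xhat_ge0 (N : nat) (xi xis : nat -> R) (theta : R) : 0 <= Xhat N xi xis theta.
Proof. by apply: (big_ind (fun x => 0 <= x)) => // a b; rewrite le_max => ->. Qed.

Lemma sqrt_xi_le_Xhat (N k : nat) (xi xis : nat -> R) (theta : R) : (1 <= k <= N)%N ->
  Num.sqrt (xi k ^+ 2 + xis k ^+ 2) <= Xhat N xi xis theta.
Proof.
move=> hk; rewrite -(sqr_xi_th_add xi xis theta).
apply: (le_bigmax_seq 0 k predT
  (fun i => Num.sqrt (xi_th xi xis theta i ^+ 2 + xis_th xi xis theta i ^+ 2))) => //.
by rewrite mem_index_iota ltnS.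
Qed.

Lemma sinusoid_obs (f : R -> R) (theta eps tau : R) (xi xis : nat -> R) (k : nat) :
  sinusoid (obs_x f theta eps xi k) (obs_xs f theta eps xis k) (2 * pi * k%:R) tau
  = fcoef f k * cos (2 * pi * k%:R * (tau - theta)) + eps * xi_th xi xis tau k.
Proof. by rewrite /sinusoid /obs_x /obs_xs /xi_th mulrBr cosB; ring. Qed.

Lemma sinusoid_obs_quadrature (f : R -> R) (theta eps tau : R) (xi xis : nat -> R) (k : nat) :
  sinusoid (obs_xs f theta eps xis k) (- obs_x f theta eps xi k) (2 * pi * k%:R) tau
  = eps * xis_th xi xis tau k - fcoef f k * sin (2 * pi * k%:R * (tau - theta)).
Proof. by rewrite /sinusoid /obs_x /obs_xs /xis_th (mulrBr (2 * pi * k%:R)) sinB; ring. Qed.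

Lemma twice_N_sin_le (delta : R) (N k : nat) : (0 < N)%N ->
  4 * pi * `|delta| <= N%:R^-1 -> 2 * N%:R * `|sin (2 * pi * k%:R * delta)| <= k%:R.
Proof.
move=> N0 hd.
have n0 : 0 < N%:R :> R by rewrite ltr0n.
have pi0 := @pi_gt0 R.
apply: le_trans (_ : 2 * N%:R * `|2 * pi * k%:R * delta| <= _).
  by rewrite ler_wpM2l ?normr_sin_le // mulr_ge0 // ltW.
have -> : 2 * N%:R * `|2 * pi * k%:R * delta| = k%:R * N%:R * (4 * pi * `|delta|).
  by rewrite !normrM (ger0_norm (ltW pi0)) !normr_nat; ring.
rewrite -[X in _ <= X]mulr1 -mulrA ler_wpM2l //.
by rewrite (le_trans (ler_wpM2l (ltW n0) hd)) // mulfV ?gt_eqF.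
Qed.

Lemma Phi''_term_le (f : R -> R) (theta beta bh eps tau hk : R) (xi xis : nat -> R)
    (N k : nat) :
  1 <= beta -> bh <= beta -> bh <= 2 -> 0 <= eps -> 0 <= hk <= 1 -> (1 <= k <= N)%N ->
  4 * pi * `|tau - theta| <= N%:R^-1 ->
  `| hk * (2 * pi * k%:R) ^+ 2 *
       (sinusoid (obs_xs f theta eps xis k) (- obs_x f theta eps xi k) (2 * pi * k%:R) tau ^+ 2
        - sinusoid (obs_x f theta eps xi k) (obs_xs f theta eps xis k) (2 * pi * k%:R) tau ^+ 2)
     + (2 * pi * k%:R) ^+ 2 * hk * fcoef f k ^+ 2 |
  <= N%:R `^ (2 - 2 * bh) * ((2 * pi * k%:R) `^ (2 * beta) * fcoef f k ^+ 2)
     + 2 * eps * Xhat N xi xis theta * ((2 * pi * k%:R) ^+ 2 * `|fcoef f k|)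
     + eps ^+ 2 * Xhat N xi xis theta ^+ 2 * (2 * pi * k%:R) ^+ 2.
Proof.
move=> b1 hbb hb2 e0 /andP[h0 h1] kN hd.
rewrite sinusoid_obs sinusoid_obs_quadrature.
set w := 2 * pi * k%:R; set F := fcoef f k; set X := Xhat N xi xis theta.
set c := cos (w * (tau - theta)); set s := sin (w * (tau - theta)).
set p := xi_th xi xis tau k; set q := xis_th xi xis tau k.
have hD := quadrature_defect_le F p q (cos2Dsin2 (w * (tau - theta))) e0.
rewrite -/c -/s (sqr_xi_th_add xi xis tau k) in hD.
have rhoX : Num.sqrt (xi k ^+ 2 + xis k ^+ 2) <= X by apply: sqrt_xi_le_Xhat.
have rho0 : 0 <= xi k ^+ 2 + xis k ^+ 2 by rewrite addr_ge0 ?sqr_ge0.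
set rho := xi k ^+ 2 + xis k ^+ 2 in hD rhoX rho0 *.
have N0 : (0 < N)%N by case/andP: kN; exact: leq_trans.
have sinN : 2 * N%:R * `|s| <= k%:R by apply: twice_N_sin_le.
have sinT := sqr_sin_term_le (c := 2 * pi) (n := N%:R) (beta := beta) _ _ b1 hbb hb2 sinN.
rewrite (_ : _ + _ = hk * w ^+ 2 * ((eps * q - F * s) ^+ 2 - (F * c + eps * p) ^+ 2 + F ^+ 2));
  last by ring.
rewrite normrM (ger0_norm (mulr_ge0 h0 (sqr_ge0 w))) -mulrA.
apply: le_trans (_ : w ^+ 2 * (2 * F ^+ 2 * s ^+ 2 + 2 * eps * `|F| * Num.sqrt rho
    + eps ^+ 2 * rho) <= _).
  apply: le_trans (ler_piMl (mulr_ge0 (sqr_ge0 w) (normr_ge0 _)) h1) _.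
  by rewrite ler_wpM2l ?sqr_ge0.
rewrite 2!mulrDr; apply: lerD; first apply: lerD.
- rewrite (_ : w ^+ 2 * _ = F ^+ 2 * (w ^+ 2 * (2 * s ^+ 2))); last by ring.
  rewrite [RHS in _ <= RHS]mulrA [RHS in _ <= RHS]mulrC ler_wpM2l ?sqr_ge0 //.
  apply: sinT; first by have := @pi_ge2 R; lra.
  by case/andP: kN => k1 kN; rewrite ler1n k1 ler_nat.
- rewrite (_ : w ^+ 2 * _ = 2 * eps * (w ^+ 2 * `|F|) * Num.sqrt rho); last by ring.
  rewrite [RHS in _ <= RHS]mulrAC ler_wpM2l //.
  exact: mulr_ge0 (mulr_ge0 (ler0n _ 2) e0) (mulr_ge0 (sqr_ge0 w) (normr_ge0 F)).
- rewrite (_ : w ^+ 2 * _ = eps ^+ 2 * w ^+ 2 * rho); last by ring.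
  rewrite [RHS in _ <= RHS]mulrAC ler_wpM2l ?(mulr_ge0 (sqr_ge0 eps) (sqr_ge0 w)) //.
  by rewrite -(sqr_sqrtr rho0) ler_sqr ?nnegrE ?sqrtr_ge0 ?Xhat_ge0.
Qed.

Lemma Phi''_defect_le (f : R -> R) (theta beta bh eps tau : R) (xi xis h : nat -> R) (N : nat) :
  1 <= beta -> bh <= beta -> bh <= 2 -> 0 <= eps ->
  (forall k, (1 <= k <= N)%N -> 0 <= h k <= 1) -> 4 * pi * `|tau - theta| <= N%:R^-1 ->
  `| Phi'' N (obs_x f theta eps xi) (obs_xs f theta eps xis) h tau
     + \sum_(1 <= k < N.+1) (2 * pi * k%:R) ^+ 2 * h k * fcoef f k ^+ 2 |
  <= N%:R `^ (2 - 2 * bh) * \sum_(1 <= k < N.+1) (2 * pi * k%:R) `^ (2 * beta) * fcoef f k ^+ 2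
     + 2 * eps * Xhat N xi xis theta * \sum_(1 <= k < N.+1) (2 * pi * k%:R) ^+ 2 * `|fcoef f k|
     + eps ^+ 2 * Xhat N xi xis theta ^+ 2 * \sum_(1 <= k < N.+1) (2 * pi * k%:R) ^+ 2.
Proof.
move=> b1 hbb hb2 e0 hh hd.
rewrite Phi''E -big_split /= !mulr_sumr -!big_split /=.
apply: le_trans (ler_norm_sum _ _ _) _.
apply: ler_sum_nat => k; rewrite -ltnS => kN.
exact: Phi''_term_le (hh k kN) kN hd.
Qed.

End SecondDerivativeBound.

Theorem lemma1 (R : realType) (f : R -> R) (theta beta eps : R) (N : nat)
    (xi xis : nat -> R) (h : nat -> R) :
  admissible_f f ->
  1 < beta ->
  (sobnorm2 f beta < +oo)%E ->
  0 < eps < 1 ->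
  (N%:Z = Num.floor ((eps ^+ 2 * ln (eps ^- 5)) `^ (- (2 * beta + 1)^-1)))%R ->
  (1 <= N)%N ->
  (forall k, (1 <= k <= N)%N -> 0 <= h k <= 1) ->
  let bh := Num.min beta (3 / 2) in
  let x := obs_x f theta eps xi in
  let xs := obs_xs f theta eps xis in
  forall tau : R, 4 * pi * `|tau - theta| <= N%:R^-1 ->
  `| Phi'' N x xs h tau + \sum_(1 <= k < N.+1) (2 * pi * k%:R) ^+ 2 * h k * fcoef f k ^+ 2 |
    <= N%:R `^ (2 - 2 * bh) *
       (sobnorm f beta + 2 * pi * Xhat N xi xis theta / Num.sqrt (ln (eps ^- 5))) ^+ 2.
Proof.
(* The bound only involves the Fourier coefficients, so admissibility of f is not needed. *)
move=> _ b_gt1 hfin he hN N1 hh bh x xs tau hd.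
have b1 : 1 <= beta by exact: ltW.
have hbb : bh <= beta by rewrite ge_min lexx.
have hb2 : bh <= 2 by rewrite ge_min; apply/orP; right; lra.
have e0 : 0 <= eps by case/andP: he => /ltW.
have L0 : 0 < ln (eps ^- 5) by rewrite ln_expVn_gt0.
have z0 : 0 < eps ^+ 2 * ln (eps ^- 5) by rewrite mulr_gt0 // exprn_gt0 //; case/andP: he.
have zN : eps ^+ 2 * ln (eps ^- 5) * N%:R `^ (2 * beta + 1) <= 1.
  by apply: floor_powR_le hN => //; lra.
apply: le_trans (Phi''_defect_le f xi xis b1 hbb hb2 e0 hh hd) _.
apply: (sum_terms_le_sqr (G := \sum_(1 <= k < N.+1) (2 * pi * k%:R) `^ (4 - 2 * beta))) => //.
- exact: sobnorm_partial_le.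
- exact: sqrtr_ge0.
- exact: Xhat_ge0.
- by apply: sumr_ge0 => k _; rewrite powR_ge0.
- by rewrite mulr_ge0 // pi_ge0.
- by apply: sqr_sum_weighted_le => k /andP[k1 _]; rewrite mulr_gt0 ?ltr0n // mulr_gt0 ?pi_gt0.
- exact: sum_powR_freq_le (ltW z0) N1 b1 hbb hb2 zN.
- exact: sum_sqr_freq_le (ltW z0) N1 hbb zN.
Qed.
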